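(* Let $\mathcal{C}\subseteq\mathbb{R}^n$ be a nonempty closed convex set, $\theta^*\in\mathbb{R}^n$, $Z$ a random vector with $\mathbb{E}Z=0$ and $\mathbb{E}\|Z\|^2<\infty$, and for $\sigma>0$ let $Y=\theta^*+\sigma Z$ and $\hat\theta(Y)=\Pi_{\mathcal{C}}(Y)$. Suppose $$\sup_{x\in\mathbb{R}^n}\Big(\|\Pi_{F_{\mathcal{C}}(\Pi_{\mathcal{C}}(\theta^* ))}(x)\|^2-\|\Pi_{K_{\mathcal{C}}}(x)\|^2\Big)<\infty.$$ Then $$\lim_{\sigma\to\infty}\frac{1}{\sigma^2}M(\hat\theta,\theta^* )=\lim_{\sigma\to\infty}\frac{1}{\sigma^2}E(\hat\theta,\theta^* )=\delta(K_{\mathcal{C}}).$$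
   Context: $\Pi_S$ is Euclidean projection onto a closed convex set $S$. For $\theta_0\in\mathcal{C}$, $F_{\mathcal{C}}(\theta_0)=\{\theta-\theta_0:\theta\in\mathcal{C}\}$ and $T_{\mathcal{C}}(\theta_0)=\mathrm{cl}\{\alpha(\theta-\theta_0):\alpha\ge0,\theta\in\mathcal{C}\}$. The core cone is $K_{\mathcal{C}}=\bigcap_{\theta\in\mathcal{C}}T_{\mathcal{C}}(\theta)$. Misspecified risk: $M(\hat\theta,\theta^* )=\mathbb{E}\|\hat\theta(Y)-\Pi_{\mathcal{C}}(\theta^* )\|^2$; excess risk: $E(\hat\theta,\theta^* )=\mathbb{E}\|\hat\theta(Y)-\theta^*\|^2-\|\Pi_{\mathcal{C}}(\theta^* )-\theta^*\|^2$. For a closed convex cone $T$, $\delta(T)=\mathbb{E}\|\Pi_T(Z)\|^2$ (expectation over the distribution of $Z$). *)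

From HB Require Import structures.
From mathcomp Require Import all_boot all_order all_algebra.
From mathcomp Require Import all_classical all_reals all_analysis.
Set Implicit Arguments. Unset Strict Implicit. Unset Printing Implicit Defensive.
Import Order.TTheory GRing.Theory Num.Theory.
Import numFieldNormedType.Exports.
Local Open Scope classical_set_scope.
Local Open Scope ring_scope.

Section Defs.
Variables (R : realType) (n : nat).
Implicit Types (S C : set 'rV[R]_n) (x y : 'rV[R]_n).

Definition sqnorm (x : 'rV[R]_n) : R := \sum_(i < n) x ord0 i ^+ 2.

Definition convex_set_rv C : Prop :=
  forall x y t, C x -> C y -> 0 <= t <= 1 -> C (t *: x + (1 - t) *: y).

Definition eproj S x : 'rV[R]_n :=
  xget 0 [set p | S p /\ forall q, S q -> sqnorm (x - p) <= sqnorm (x - q)].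

Definition feas_dir C (t0 : 'rV[R]_n) : set 'rV[R]_n :=
  [set th - t0 | th in C].

Definition tangent_cone C (t0 : 'rV[R]_n) : set 'rV[R]_n :=
  closure [set v | exists a : R, exists th, 0 <= a /\ C th /\ v = a *: (th - t0)].

Definition core_cone C : set 'rV[R]_n :=
  [set v | forall th, C th -> tangent_cone C th v].

End Defs.

(** Write p for the projection of theta onto C, K for the core cone and q_s(z)
    for the projection of theta + s z onto C.  As K lies in the tangent cone of
    C at q_s(z), the variational inequality at q_s(z) gives
    s^2 |P_K z|^2 <= |q_s(z) - theta|^2.  Conversely, q_s(z) - p is the
    projection of (theta - p) + s z onto F_C(p), so the hypothesis, the positive
    homogeneity and the 1-Lipschitz continuity of |P_K .| give
    |q_s(z) - p|^2 <= B + (1 + d) s^2 |P_K z|^2 + O(1/d).  Hence both integrands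
    equal s^2 |P_K z|^2 up to a relative error e and an additive constant
    independent of s and z; integrating and dividing by s^2 yields both limits. *)

From HB Require Import structures.
From mathcomp Require Import all_boot all_order all_algebra.
From mathcomp Require Import all_classical all_reals all_analysis.
From mathcomp Require Import ring lra measurable_realfun.
Import Order.TTheory GRing.Theory Num.Theory.
Import numFieldNormedType.Exports.
Local Open Scope classical_set_scope.
Local Open Scope ring_scope.

Set Implicit Arguments. Unset Strict Implicit. Unset Printing Implicit Defensive.

Section Euclidean.
Variables (R : realType) (n : nat).
Implicit Types (x y z : 'rV[R]_n) (a b d : R).

Definition dot x y : R := \sum_(i < n) x ord0 i * y ord0 i.

Lemma sqnormE x : sqnorm x = dot x x.
Proof. by apply: eq_bigr => i _; rewrite expr2. Qed.

Lemma dotC x y : dot x y = dot y x.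
Proof. by apply: eq_bigr => i _; rewrite mulrC. Qed.

Lemma dotDl x y z : dot (x + y) z = dot x z + dot y z.
Proof. by rewrite /dot -big_split; apply: eq_bigr => i _; rewrite !mxE mulrDl. Qed.

Lemma dotDr x y z : dot z (x + y) = dot z x + dot z y.
Proof. by rewrite dotC dotDl !(dotC z). Qed.

Lemma dotZl a x y : dot (a *: x) y = a * dot x y.
Proof. by rewrite /dot mulr_sumr; apply: eq_bigr => i _; rewrite !mxE mulrA. Qed.

Lemma dotZr a x y : dot x (a *: y) = a * dot x y.
Proof. by rewrite dotC dotZl dotC. Qed.

Lemma dotNl x y : dot (- x) y = - dot x y.
Proof. by rewrite -scaleN1r dotZl mulN1r. Qed.

Lemma dotNr x y : dot x (- y) = - dot x y.
Proof. by rewrite dotC dotNl dotC. Qed.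

Lemma dotBl x y z : dot (x - y) z = dot x z - dot y z.
Proof. by rewrite dotDl dotNl. Qed.

Lemma dotBr x y z : dot z (x - y) = dot z x - dot z y.
Proof. by rewrite dotDr dotNr. Qed.

Lemma dot0l x : dot 0 x = 0.
Proof. by rewrite -(scale0r 0) dotZl mul0r. Qed.

Lemma dot0r x : dot x 0 = 0.
Proof. by rewrite dotC dot0l. Qed.

Lemma sqnorm_ge0 x : 0 <= sqnorm x.
Proof. by apply: sumr_ge0 => i _; exact: sqr_ge0. Qed.

Lemma sqnorm_eq0 x : sqnorm x = 0 -> x = 0.
Proof.
move=> x0; apply/rowP => i; rewrite mxE.
have /eqP := psumr_eq0P (fun i _ => sqr_ge0 (x ord0 i)) x0 (i := i) isT.
by rewrite sqrf_eq0 => /eqP.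
Qed.

Lemma sqnormD x y : sqnorm (x + y) = sqnorm x + 2 * dot x y + sqnorm y.
Proof. rewrite !sqnormE dotDl !dotDr (dotC y x); ring. Qed.

Lemma sqnormB x y : sqnorm (x - y) = sqnorm x - 2 * dot x y + sqnorm y.
Proof. rewrite !sqnormE dotBl !dotBr (dotC y x); ring. Qed.

Lemma sqnormZ a x : sqnorm (a *: x) = a ^+ 2 * sqnorm x.
Proof. rewrite !sqnormE dotZl dotZr; ring. Qed.

Lemma sqnormN x : sqnorm (- x) = sqnorm x.
Proof. by rewrite !sqnormE dotNl dotNr opprK. Qed.

Lemma sqnormBC x y : sqnorm (x - y) = sqnorm (y - x).
Proof. by rewrite -sqnormN opprB. Qed.

Lemma dot_young d x y : 0 < d -> 2 * dot x y <= d * sqnorm x + sqnorm y / d.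
Proof.
move=> d0; rewrite -subr_ge0.
have -> : d * sqnorm x + sqnorm y / d - 2 * dot x y = sqnorm (d *: x - y) / d.
  by rewrite sqnormB sqnormZ dotZl; field; rewrite gt_eqF.
by rewrite divr_ge0 ?sqnorm_ge0 ?ltW.
Qed.

Definition nrm x : R := Num.sqrt (sqnorm x).

Lemma nrm_ge0 x : 0 <= nrm x.
Proof. exact: sqrtr_ge0. Qed.

Lemma sqr_nrm x : nrm x ^+ 2 = sqnorm x.
Proof. by rewrite sqr_sqrtr // sqnorm_ge0. Qed.

Lemma ler_nrm x y : (nrm x <= nrm y) = (sqnorm x <= sqnorm y).
Proof. by rewrite /nrm ler_sqrt // sqnorm_ge0. Qed.

Lemma nrm_le x a : 0 <= a -> sqnorm x <= a ^+ 2 -> nrm x <= a.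
Proof. by move=> a0 xa; rewrite -(ger0_norm a0) -sqrtr_sqr ler_sqrt // sqr_ge0. Qed.

Lemma nrm_gt0 x : sqnorm x != 0 -> 0 < nrm x.
Proof. by move=> x0; rewrite sqrtr_gt0 lt_def x0 sqnorm_ge0. Qed.

Lemma nrmZ a x : nrm (a *: x) = `|a| * nrm x.
Proof. by rewrite /nrm sqnormZ sqrtrM ?sqr_ge0 // sqrtr_sqr. Qed.

Lemma nrmBC x y : nrm (x - y) = nrm (y - x).
Proof. by rewrite /nrm sqnormBC. Qed.

Lemma dot_le_nrm x y : dot x y <= nrm x * nrm y.
Proof.
have [/sqnorm_eq0 ->|/nrm_gt0 x0] := eqVneq (sqnorm x) 0.
  by rewrite dot0l mulr_ge0 ?nrm_ge0.
have [/sqnorm_eq0 ->|/nrm_gt0 y0] := eqVneq (sqnorm y) 0.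
  by rewrite dot0r mulr_ge0 ?nrm_ge0.
have := dot_young x y (divr_gt0 y0 x0); rewrite -!sqr_nrm.
have -> : nrm y / nrm x * nrm x ^+ 2 + nrm y ^+ 2 / (nrm y / nrm x) =
    2 * (nrm x * nrm y) by field; rewrite !gt_eqF.
lra.
Qed.

Lemma ler_nrmD x y : nrm (x + y) <= nrm x + nrm y.
Proof.
apply: nrm_le; first by rewrite addr_ge0 ?nrm_ge0.
by rewrite sqnormD -!sqr_nrm; have := dot_le_nrm x y; nra.
Qed.

Lemma ler_nrm_dist x y : `|nrm x - nrm y| <= nrm (x - y).
Proof.
have := ler_nrmD (x - y) y; have := ler_nrmD (y - x) x.
by rewrite !subrK nrmBC ler_norml; lra.
Qed.

Lemma sqr_addr_le a b d : 0 < d ->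
  (a + b) ^+ 2 <= (1 + d) * a ^+ 2 + (1 + d^-1) * b ^+ 2.
Proof.
move=> d0; rewrite -subr_ge0.
have -> : (1 + d) * a ^+ 2 + (1 + d^-1) * b ^+ 2 - (a + b) ^+ 2 =
    (d * a - b) ^+ 2 / d by field; rewrite gt_eqF.
by rewrite divr_ge0 ?sqr_ge0 ?ltW.
Qed.

Lemma sqnormD_le x y d : 0 < d ->
  sqnorm (x + y) <= (1 + d) * sqnorm x + (1 + d^-1) * sqnorm y.
Proof.
move=> d0; rewrite -!sqr_nrm; apply: le_trans (sqr_addr_le _ _ d0).
by have := ler_nrmD x y; have := nrm_ge0 (x + y); nra.
Qed.

End Euclidean.

Lemma continuous_sum (K : numFieldType) (V : normedModType K) (T : topologicalType)
    (I : finType) (F : I -> T -> V) :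
  (forall i, continuous (F i)) -> continuous (fun t => \sum_i F i t).
Proof.
move=> cF; rewrite -fct_sumE.
apply: (big_ind (fun f : T -> V => continuous f)) => //.
- exact: cst_continuous.
- by move=> f g cf cg t; exact: (continuousD (cf t) (cg t)).
Qed.

Section Projection.
Variables (R : realType) (n : nat).
Implicit Types (x y z q v : 'rV[R]_n) (S : set 'rV[R]_n).

Lemma dot_continuous y : continuous (dot y).
Proof.
apply: continuous_sum => i x.
by apply: continuousM; [exact: cst_continuous | exact: coord_continuous].
Qed.

Lemma sqnorm_continuous : continuous (@sqnorm R n).
Proof. by apply: continuous_sum => i x; apply: continuousM; exact: coord_continuous. Qed.

Lemma sqnorm_dist_continuous x : continuous (fun q => sqnorm (x - q)).
Proof.
move=> q; apply: continuous_comp; last exact: sqnorm_continuous.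
by apply: continuousB; [exact: cst_continuous | exact: cvg_id].
Qed.

Lemma normr_le_nrm v : `|v| <= nrm v.
Proof.
rewrite [leLHS]/Num.Def.normr /= mx_normrE.
apply: bigmax_le => [|[i j] _ /=]; first exact: nrm_ge0.
rewrite (ord1 i) -sqrtr_sqr ler_sqrt ?sqnorm_ge0 // /sqnorm (bigD1 j) //=.
by rewrite lerDl sumr_ge0 // => k _; exact: sqr_ge0.
Qed.

Definition is_proj S x p := S p /\ forall q, S q -> sqnorm (x - p) <= sqnorm (x - q).

Lemma proj_exists S x : S !=set0 -> closed S -> exists p, is_proj S x p.
Proof.
move=> [s0 Ss0] cS.
pose A := S `&` [set q | sqnorm (x - q) <= sqnorm (x - s0)].
have cA : closed A.
  apply: closedI => //.
  apply: (@preimage_closed _ _ (fun q => sqnorm (x - q)) [set r | r <= _]).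
    by move=> q _; exact: sqnorm_dist_continuous.
  exact: closed_le.
have bA : [bounded q | q in A].
  exists (nrm x + nrm (x - s0)); split; first exact: num_real.
  move=> M xM q [_ /= Aq]; apply: le_trans (normr_le_nrm q) (ltW (le_lt_trans _ xM)).
  rewrite -[q](addrNK x) addrC; apply: le_trans (ler_nrmD _ _) _.
  by rewrite lerD2l (nrmBC q) ler_nrm.
have [|p Ap pmin] := EVT_min_rV _ (bounded_closed_compact bA cA)
  (continuous_subspaceT (@sqnorm_dist_continuous x)).
  by exists s0; split => //=; rewrite lexx.
move: Ap; rewrite inE => -[Sp Ap]; exists p; split => // q Sq.
have [qs0|/ltW qs0] := leP (sqnorm (x - q)) (sqnorm (x - s0)); last exact: le_trans qs0.
by apply: pmin; rewrite inE.
Qed.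

Lemma eprojP S x : S !=set0 -> closed S -> is_proj S x (eproj S x).
Proof. by move=> S0 cS; exact: (xgetPex 0 (proj_exists x S0 cS)). Qed.

Lemma proj_dir_le0 S x p v : is_proj S x p ->
  (forall t, 0 < t <= 1 -> S (p + t *: v)) -> dot (x - p) v <= 0.
Proof.
move=> [Sp pmin] Sv; rewrite leNgt; apply/negP => D0.
set D := dot (x - p) v in D0; set N := sqnorm v.
have N0 : 0 <= N := sqnorm_ge0 v.
pose t := D / (D + N).
have tDN : t * (D + N) = D by rewrite divfK // gt_eqF //; lra.
have t0 : 0 < t by rewrite divr_gt0 //; lra.
have t1 : t <= 1 by rewrite ler_pdivrMr ?mul1r; lra.
have := pmin _ (Sv t (andb_true_intro (conj t0 t1))).
rewrite opprD addrA [sqnorm (x - p - _)]sqnormB dotZr sqnormZ -/D -/N => h.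
have : 2 * D <= t * N by rewrite -(ler_pM2l t0); nra.
nra.
Qed.

Lemma convex_segment S c p t : convex_set_rv S -> S c -> S p -> 0 <= t <= 1 ->
  S (p + t *: (c - p)).
Proof.
move=> cvx Sc Sp t01; have := cvx c p t Sc Sp t01.
by rewrite scalerBl scale1r scalerBr addrCA addrC.
Qed.

Lemma proj_convex_dot_le0 S x p c : convex_set_rv S -> is_proj S x p -> S c ->
  dot (x - p) (c - p) <= 0.
Proof.
move=> cvx Pp Sc; apply: (proj_dir_le0 Pp) => t /andP[t0 t1].
by apply: convex_segment => //; [exact: Pp.1 | rewrite ltW].
Qed.

Lemma proj_convex_unique S x p1 p2 : convex_set_rv S ->
  is_proj S x p1 -> is_proj S x p2 -> p1 = p2.
Proof.
move=> cvx P1 P2; apply/eqP; rewrite eq_sym -subr_eq0; apply/eqP/sqnorm_eq0.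
have h1 := proj_convex_dot_le0 cvx P1 P2.1.
have h2 := proj_convex_dot_le0 cvx P2 P1.1.
have : sqnorm (p2 - p1) = dot (x - p1) (p2 - p1) + dot (x - p2) (p1 - p2).
  rewrite sqnormB !dotBl !dotBr !sqnormE (dotC p1 p2) (dotC x p1) (dotC x p2); ring.
by have := sqnorm_ge0 (p2 - p1); lra.
Qed.

Section ClosedConvex.
Variable S : set 'rV[R]_n.
Hypotheses (S0 : S !=set0) (cS : closed S) (cvx : convex_set_rv S).

Lemma eproj_unique x p : is_proj S x p -> eproj S x = p.
Proof. exact: proj_convex_unique cvx (eprojP x S0 cS). Qed.

Lemma eproj_dot_le0 x c : S c -> dot (x - eproj S x) (c - eproj S x) <= 0.
Proof. exact: proj_convex_dot_le0 cvx (eprojP x S0 cS). Qed.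

Lemma nrm_eprojB_le x y : nrm (eproj S x - eproj S y) <= nrm (x - y).
Proof.
rewrite ler_nrm.
have hx := eproj_dot_le0 x (eprojP y S0 cS).1.
have hy := eproj_dot_le0 y (eprojP x S0 cS).1.
set p := eproj S x in hx hy *; set q := eproj S y in hx hy *.
have : sqnorm (p - q) = dot (x - y) (p - q) + dot (x - p) (q - p) + dot (y - q) (p - q).
  rewrite !sqnormE !dotBl !dotBr (dotC q p) (dotC x q) (dotC y p) (dotC x p) (dotC y q); ring.
have := dot_young (x - y) (p - q) ltr01; rewrite invr1 mulr1 mul1r; lra.
Qed.

End ClosedConvex.
End Projection.

Section CoreCone.
Variables (R : realType) (n : nat) (C : set 'rV[R]_n).
Implicit Types (x y v p : 'rV[R]_n) (t : R).

Lemma core_cone_closed : closed (core_cone C).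
Proof.
have -> : core_cone C = \bigcap_(th in C) tangent_cone C th by [].
by apply: closed_bigI => th _; exact: closed_closure.
Qed.

Lemma core_cone0 : core_cone C 0.
Proof. by move=> th Cth; apply: subset_closure; exists 0, th; rewrite scale0r. Qed.

Lemma core_coneZ t v : 0 <= t -> core_cone C v -> core_cone C (t *: v).
Proof.
move=> t0 Kv th Cth.
have cT : closed [set u | tangent_cone C th (t *: u)].
  apply: (@preimage_closed _ _ (fun u : 'rV[R]_n => t *: u)); last exact: closed_closure.
  by move=> u _; apply: continuousZ; [exact: cst_continuous | exact: cvg_id].
suff sub : tangent_cone C th `<=` [set u | tangent_cone C th (t *: u)].
  exact: sub (Kv th Cth).
rewrite {1}/tangent_cone closureE; apply: smallest_sub => //.
move=> _ [a [th0 [a0 [Cth0 ->]]]]; apply: subset_closure.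
by exists (t * a), th0; rewrite mulr_ge0 // scalerA.
Qed.

Section ClosedConvex.
Hypotheses (C0 : C !=set0) (cC : closed C) (cvx : convex_set_rv C).

Lemma tangent_cone_dot_le0 x v : tangent_cone C (eproj C x) v ->
  dot (x - eproj C x) v <= 0.
Proof.
set p := eproj C x; rewrite /tangent_cone; set G := [set _ | _].
suff sub : closure G `<=` [set u | dot (x - p) u <= 0] by exact: sub.
rewrite closureE; apply: smallest_sub.
  apply: (@preimage_closed _ _ (dot (x - p)) [set r | r <= 0]); last exact: closed_le.
  by move=> u _; exact: dot_continuous.
move=> _ [a [th [a0 [Cth ->]]]] /=; rewrite dotZr mulr_ge0_le0 //.
exact: eproj_dot_le0.
Qed.

Lemma core_cone_dot_le0 x v : core_cone C v -> dot (x - eproj C x) v <= 0.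
Proof. by move=> Kv; apply/tangent_cone_dot_le0/Kv; exact: (eprojP x C0 cC).1. Qed.

Lemma eproj_feas_dir p y : eproj (feas_dir C p) y = eproj C (y + p) - p.
Proof.
have F0 : feas_dir C p !=set0 by have [c Cc] := C0; exists (c - p), c.
have cF : closed (feas_dir C p).
  have -> : feas_dir C p = (+%R^~ p) @^-1` C.
    apply/seteqP; split => [_ [th Cth <-]|v Cv] /=; first by rewrite subrK.
    by exists (v + p); rewrite ?addrK.
  apply: preimage_closed => // u _.
  by apply: continuousD; [exact: cvg_id | exact: cst_continuous].
have [[c Cc <-] cmin] := eprojP y F0 cF.
congr (_ - _); apply/esym/eproj_unique => //; split => // q Cq.
by have := cmin (q - p) (ex_intro2 _ _ q Cq erefl); rewrite !opprB !addrA.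
Qed.

End ClosedConvex.
End CoreCone.

Section ConeProjection.
Variables (R : realType) (n : nat) (K : set 'rV[R]_n).
Hypotheses (cK : closed K) (K0 : K 0)
  (KZ : forall t v, 0 <= t -> K v -> K (t *: v)).
Implicit Types (z k : 'rV[R]_n) (s : R).
Local Notation PK := (eproj K).

(* K need not be convex: [PK z] is just some nearest point of K. *)
Let proj_cone z : is_proj K z (PK z) := eprojP z (ex_intro _ 0 K0) cK.

Lemma dot_proj_cone z : dot z (PK z) = sqnorm (PK z).
Proof.
have up : dot (z - PK z) (PK z) <= 0.
  apply: (proj_dir_le0 (proj_cone z)) => t /andP[t0 _].
  rewrite -{1}(scale1r (PK z)) -scalerDl.
  by apply: KZ (proj_cone z).1; rewrite addr_ge0 ?ltW.
have down : dot (z - PK z) (- PK z) <= 0.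
  apply: (proj_dir_le0 (proj_cone z)) => t /andP[_ t1].
  rewrite scalerN -{1}(scale1r (PK z)) -scalerBl.
  by apply: KZ (proj_cone z).1; rewrite subr_ge0.
by move: up down; rewrite dotNr dotBl -sqnormE; lra.
Qed.

Lemma proj_cone_max z k : K k -> 2 * dot z k - sqnorm k <= sqnorm (PK z).
Proof. by move=> /(proj_cone z).2; rewrite !sqnormB dot_proj_cone; lra. Qed.

Lemma sqnorm_proj_cone_le z : sqnorm (PK z) <= sqnorm z.
Proof. by have := sqnorm_ge0 (z - PK z); rewrite sqnormB dot_proj_cone; lra. Qed.

Lemma sqnorm_proj_coneZ_le s z : 0 < s ->
  sqnorm (PK (s *: z)) <= s ^+ 2 * sqnorm (PK z).
Proof.
move=> s0; set k := PK (s *: z).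
have zk : dot z k = s^-1 * sqnorm k.
  by rewrite -(dot_proj_cone (s *: z)) dotZl mulKf ?gt_eqF.
have si0 : 0 <= s^-1 by rewrite invr_ge0 ltW.
have := proj_cone_max z (KZ si0 (proj_cone (s *: z)).1).
rewrite -/k dotZr sqnormZ zk.
have -> : 2 * (s^-1 * (s^-1 * sqnorm k)) - s^-1 ^+ 2 * sqnorm k =
    s^-1 ^+ 2 * sqnorm k by ring.
by rewrite exprVn mulrC ler_pdivrMr ?exprn_gt0 // mulrC.
Qed.

Lemma nrm_proj_coneZ s z : 0 <= s -> nrm (PK (s *: z)) = s * nrm (PK z).
Proof.
rewrite le_eqVlt => /predU1P[<-|s0].
  have P00 : sqnorm (PK 0) = 0.
    apply/le_anti; rewrite sqnorm_ge0 andbT.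
    by rewrite -(dot0l (0 : 'rV[R]_n)) -sqnormE sqnorm_proj_cone_le.
  by rewrite scale0r mul0r /nrm P00 sqrtr0.
rewrite /nrm; suff -> : sqnorm (PK (s *: z)) = s ^+ 2 * sqnorm (PK z).
  by rewrite sqrtrM ?sqr_ge0 // sqrtr_sqr gtr0_norm.
apply/le_anti; rewrite sqnorm_proj_coneZ_le //=.
have := @sqnorm_proj_coneZ_le _ (s *: z) (_ : 0 < s^-1); rewrite invr_gt0 => /(_ s0).
by rewrite scalerA mulVf ?gt_eqF // scale1r exprVn -ler_pdivlMl ?exprn_gt0 // mulrC.
Qed.

Lemma nrm_proj_cone_lip z z' : nrm (PK z) - nrm (PK z') <= nrm (z - z').
Proof.
set k := PK z; set r := nrm k; set d := nrm (z - z').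
have d0 : 0 <= d := nrm_ge0 _.
have [rd|dr] := leP r d; first by have := nrm_ge0 (PK z'); lra.
have r0 : 0 < r by lra.
have z'k : r ^+ 2 - d * r <= dot z' k.
  have := dot_le_nrm (z - z') k.
  by rewrite dotBl dot_proj_cone -sqr_nrm -/k -/r -/d; lra.
pose t := (r - d) / r.
have tr : t * r = r - d by rewrite divfK ?gt_eqF.
have t0 : 0 <= t by rewrite divr_ge0 //; lra.
have e1 : t * (r ^+ 2 - d * r) = (r - d) ^+ 2 by rewrite [RHS]expr2 -{1}tr; ring.
have e2 : t ^+ 2 * r ^+ 2 = (r - d) ^+ 2 by rewrite -exprMn tr.
have := ler_wpM2l t0 z'k; rewrite e1 => ht.
have := proj_cone_max z' (KZ t0 (proj_cone z).1).
rewrite dotZr sqnormZ -!sqr_nrm -/k -/r e2 => h.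
by have := nrm_ge0 (PK z'); nra.
Qed.

End ConeProjection.

Definition quadratic_equiv (R : realType) (I : Type) (u : R -> I -> R) (g : I -> R) :=
  forall e, 0 < e <= 1 -> exists K, forall s i, 0 < s ->
    (1 - e) * (s ^+ 2 * g i) - K <= u s i <= (1 + e) * (s ^+ 2 * g i) + K.

Section Bounds.
Variables (R : realType) (n : nat) (C : set 'rV[R]_n) (theta : 'rV[R]_n).
Hypotheses (C0 : C !=set0) (cC : closed C) (cvx : convex_set_rv C).
Implicit Types (z : 'rV[R]_n) (s d : R).

Local Notation p := (eproj C theta).
Local Notation PK := (eproj (core_cone C)).
Local Notation proj s z := (eproj C (theta + s *: z)).

Let cK := @core_cone_closed _ _ C.
Let K0 := @core_cone0 _ _ C.
Let KZ := @core_coneZ _ _ C.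

Lemma sqnorm_proj_core_le s z : 0 <= s ->
  s ^+ 2 * sqnorm (PK z) <= sqnorm (proj s z - theta).
Proof.
move=> s0; set q := proj s z; set k := PK z.
have := core_cone_dot_le0 C0 cC cvx (theta + s *: z) (eprojP z (ex_intro _ 0 K0) cK).1.
have -> : theta + s *: z - q = s *: z - (q - theta) by rewrite opprB addrA (addrC (s *: z)).
rewrite -/q -/k dotBl dotZl dot_proj_cone // => polar.
have := dot_young (q - theta) (s *: k) ltr01.
rewrite invr1 mulr1 mul1r dotZr sqnormZ; nra.
Qed.

Lemma sqnorm_proj_le_core B s z d :
  (forall x, sqnorm (eproj (feas_dir C p) x) - sqnorm (PK x) <= B) -> 0 <= s -> 0 < d ->
  sqnorm (proj s z - p) <=
    B + (1 + d) * (s ^+ 2 * sqnorm (PK z)) + (1 + d^-1) * sqnorm (theta - p).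
Proof.
move=> hB s0 d0; set y := theta - p + s *: z.
have := hB y; rewrite eproj_feas_dir // (_ : y + p = theta + s *: z); last first.
  by rewrite addrAC subrK.
have := nrm_proj_cone_lip cK K0 KZ y (s *: z).
rewrite nrm_proj_coneZ // addrK => lip.
have : sqnorm (PK y) <= (1 + d) * (s * nrm (PK z)) ^+ 2 + (1 + d^-1) * nrm (theta - p) ^+ 2.
  apply: le_trans (sqr_addr_le _ _ d0); rewrite -sqr_nrm.
  have := nrm_ge0 (PK y); have := nrm_ge0 (theta - p); nra.
rewrite exprMn !sqr_nrm; lra.
Qed.

Section Sandwich.
Variable B : R.
Hypothesis hB : forall x, sqnorm (eproj (feas_dir C p) x) - sqnorm (PK x) <= B.

Lemma quadratic_equiv_proj :
  quadratic_equiv (fun s z => sqnorm (proj s z - p)) (fun z => sqnorm (PK z)).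
Proof.
move=> e /andP[e0 e1]; pose d := e / 3; pose m := d^-1.
have d0 : 0 < d by rewrite divr_gt0.
have m0 : 0 < m by rewrite invr_gt0.
have de : d <= e by rewrite /d ler_pdivrMr //; lra.
pose c := sqnorm (theta - p); have c0 : 0 <= c := sqnorm_ge0 _.
exists (`|B| + (1 + m) * c) => s z s0.
have X0 : 0 <= s ^+ 2 * sqnorm (PK z) by rewrite mulr_ge0 ?sqr_ge0 ?sqnorm_ge0.
have low := sqnorm_proj_core_le z (ltW s0).
have := sqnormD_le (proj s z - p) (p - theta) d0.
rewrite subrKA (sqnormBC p) -/c -/m => mid.
have up := sqnorm_proj_le_core z hB (ltW s0) d0; rewrite -/c -/m in up.
set X := s ^+ 2 * _ in X0 low up *; set a := sqnorm (proj s z - p) in mid up *.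
have a0 : 0 <= a := sqnorm_ge0 _.
apply/andP; split; last first.
  have : (1 + d) * X <= (1 + e) * X by rewrite ler_wpM2r // lerD2l.
  by have := ler_norm B; lra.
have : (1 - d) * X <= (1 - d) * ((1 + d) * a + (1 + m) * c).
  by rewrite ler_wpM2l ?subr_ge0 //; lra.
have : 0 <= d * d * a by rewrite -expr2 mulr_ge0 ?sqr_ge0.
have : 0 <= d * (1 + m) * c by rewrite !mulr_ge0 // ?addr_ge0 // ltW.
have : (1 - e) * X <= (1 - d) * X by rewrite ler_wpM2r // lerD2l lerN2.
have := normr_ge0 B; lra.
Qed.

Lemma quadratic_equiv_excess :
  quadratic_equiv (fun s z => sqnorm (proj s z - theta) - sqnorm (p - theta))
    (fun z => sqnorm (PK z)).
Proof.
move=> e /andP[e0 e1]; pose d := e / 3; pose m := d^-1.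
have d0 : 0 < d by rewrite divr_gt0.
have m0 : 0 < m by rewrite invr_gt0.
have de : (1 + d) * (1 + d) <= 1 + e by rewrite /d; nra.
rewrite (sqnormBC p); set c := sqnorm (theta - p).
have c0 : 0 <= c := sqnorm_ge0 _.
exists ((1 + d) * (`|B| + (1 + m) * c) + (1 + m) * c) => s z s0.
have X0 : 0 <= s ^+ 2 * sqnorm (PK z) by rewrite mulr_ge0 ?sqr_ge0 ?sqnorm_ge0.
have low := sqnorm_proj_core_le z (ltW s0).
have := sqnormD_le (proj s z - p) (p - theta) d0.
rewrite subrKA (sqnormBC p) -/c -/m => mid.
have up := sqnorm_proj_le_core z hB (ltW s0) d0; rewrite -/c -/m in up.
set X := s ^+ 2 * _ in X0 low up *; set a := sqnorm (proj s z - p) in mid up.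
have mc : 0 <= m * c by rewrite mulr_ge0 // ltW.
have Kge0 : 0 <= (1 + d) * (`|B| + (1 + m) * c).
  by apply: mulr_ge0; have := normr_ge0 B; lra.
apply/andP; split; first by nra.
have : (1 + d) * a <= (1 + d) * (`|B| + (1 + d) * X + (1 + m) * c).
  by apply: ler_wpM2l; [lra | have := ler_norm B; lra].
have : (1 + d) * (1 + d) * X <= (1 + e) * X by rewrite ler_wpM2r.
lra.
Qed.

End Sandwich.
End Bounds.

Section Measurability.
Variables (R : realType) (n : nat).

Definition rat_vec (k : nat) : 'rV[R]_n :=
  if unpickle k is Some q then map_mx (@ratr R) (q : 'rV[rat]_n) else 0.

Lemma rat_vec_dense (z : 'rV[R]_n) (e : R) : 0 < e -> exists k, nrm (z - rat_vec k) <= e.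
Proof.
move=> e0; have [eta eta0 ->] : exists2 eta : R, 0 < eta & e = eta * n.+1%:R.
  by exists (e / n.+1%:R); rewrite ?divr_gt0 ?divfK ?pnatr_eq0.
have /fin_all_exists [q hq] : forall i : 'I_n,
    exists q : rat, ratr q \in `](z ord0 i - eta), (z ord0 i + eta)[.
  by move=> i; apply: rat_in_itvoo; lra.
exists (pickle (\row_i q i)); rewrite /rat_vec pickleK.
apply: nrm_le; first by rewrite mulr_ge0 ?ltW.
apply: (@le_trans _ _ (\sum_(i < n) eta ^+ 2)).
  apply: ler_sum => i _; rewrite !mxE.
  by have := hq i; rewrite in_itv /= => /andP[? ?]; nra.
rewrite sumr_const card_ord -[_ *+ n]mulr_natr exprMn ler_wpM2l ?sqr_ge0 // -natrX ler_nat.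
by rewrite expnS (leq_trans (leqnSn n)) // leq_pmulr.
Qed.

Variables (d : measure_display) (T : measurableType d).
Variable Z : T -> 'rV[R]_n.
Hypothesis mZ : forall i, measurable_fun setT (fun w => Z w ord0 i).

Lemma measurable_nrmB q : measurable_fun setT (fun w => nrm (Z w - q)).
Proof.
apply: measurableT_comp; first exact: continuous_measurable_fun (@sqrt_continuous R).
rewrite /sqnorm; under eq_fun do under eq_bigr do rewrite !mxE.
by apply: measurable_sum => i; apply: measurable_funX; apply: measurable_funB.
Qed.

Lemma lipschitz_measurable (F : 'rV[R]_n -> R) (L : R) : 0 <= L ->
  (forall x y, `|F x - F y| <= L * nrm (x - y)) ->
  measurable_fun setT (F \o Z).
Proof.
(* F (Z w) is the infimum over k of F r_k + L |Z w - r_k|, r_k = rat_vec k. *)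
move=> L0 FL; pose phi k w := (F (rat_vec k) + L * nrm (Z w - rat_vec k))%:E.
apply/measurable_EFinP.
have -> : EFin \o (F \o Z) = fun w => einfs (phi ^~ w) 0%N.
  apply: funext => w /=; apply/eqP; rewrite eq_le; apply/andP; split.
    apply: le_ereal_inf_tmp => _ [k _ <-]; rewrite lee_fin.
    by have := FL (Z w) (rat_vec k); rewrite ler_norml; lra.
  apply/lee_addgt0Pr => e e0; have L1 : 0 < 2 * L + 1 by lra.
  have [k Zk] := rat_vec_dense (Z w) (divr_gt0 e0 L1).
  apply: ge_ereal_inf; exists (phi k w); first by exists k.
  rewrite -EFinD lee_fin.
  have := FL (rat_vec k) (Z w); rewrite ler_norml nrmBC => /andP[_ Fk].
  have : L * nrm (Z w - rat_vec k) <= L * (e / (2 * L + 1)) by rewrite ler_wpM2l.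
  have : 2 * L * (e / (2 * L + 1)) <= e.
    by rewrite mulrA ler_pdivrMr //; nra.
  nra.
apply: measurable_fun_einfs => k; apply/measurable_EFinP.
apply: measurable_funD; first exact: measurable_cst.
by apply: measurable_funM; [exact: measurable_cst | exact: measurable_nrmB].
Qed.

Lemma lipschitz_sqnorm_measurable (F : 'rV[R]_n -> 'rV[R]_n) (L : R) : 0 <= L ->
  (forall x y, `|nrm (F x) - nrm (F y)| <= L * nrm (x - y)) ->
  measurable_fun setT (fun w => sqnorm (F (Z w))).
Proof.
move=> L0 FL; under eq_fun do rewrite -sqr_nrm.
by apply: measurable_funX; exact: (lipschitz_measurable (F := fun x => nrm (F x)) L0 FL).
Qed.

Lemma measurable_sqnorm : measurable_fun setT (fun w => sqnorm (Z w)).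
Proof.
by apply: (lipschitz_sqnorm_measurable (F := id) ler01) => x y; rewrite mul1r ler_nrm_dist.
Qed.

Lemma measurable_sqnorm_proj (S : set 'rV[R]_n) a s c :
  S !=set0 -> closed S -> convex_set_rv S ->
  measurable_fun setT (fun w => sqnorm (eproj S (a + s *: Z w) - c)).
Proof.
move=> S0 cS cvx.
apply: (@lipschitz_sqnorm_measurable (fun x => eproj S (a + s *: x) - c) `|s|) => // x y.
apply: le_trans (ler_nrm_dist _ _) _; rewrite opprB addrA subrK -nrmZ.
apply: le_trans (nrm_eprojB_le S0 cS cvx _ _) _.
by rewrite scalerBr opprD addrACA subrr add0r.
Qed.

Lemma measurable_sqnorm_proj_cone (K : set 'rV[R]_n) : closed K -> K 0 ->
  (forall t v, 0 <= t -> K v -> K (t *: v)) ->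
  measurable_fun setT (fun w => sqnorm (eproj K (Z w))).
Proof.
move=> cK K0 KZ; apply: (lipschitz_sqnorm_measurable ler01) => x y.
rewrite mul1r ler_norml !nrm_proj_cone_lip // andbT lerNl opprB (nrmBC x).
exact: nrm_proj_cone_lip.
Qed.

End Measurability.

Lemma cvg_quadratic_equiv (R : realType) (u : R -> R) (L : R) : 0 <= L ->
  quadratic_equiv (fun s (_ : unit) => u s) (fun=> L) ->
  (fun s => s ^- 2 * u s) @ +oo --> L.
Proof.
move=> L0 uL; apply/cvgrPdist_le => eps eps0.
pose e := eps / (2 * (L + 1) + eps).
have den0 : 0 < 2 * (L + 1) + eps by lra.
have e0 : 0 < e by rewrite divr_gt0.
have e1 : e <= 1 by rewrite ler_pdivrMr // mul1r; lra.
have eL : e * L <= eps / 2.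
  by rewrite mulrAC ler_pdivrMr //; nra.
have [K hK] := uL e (andb_true_intro (conj e0 e1)).
near=> s.
have s1 : 1 + 2 * `|K| / eps <= s by near: s; apply: nbhs_pinfty_ge; rewrite num_real.
have Keps : 0 <= 2 * `|K| / eps by apply: divr_ge0; [exact: mulr_ge0 | exact: ltW].
have s0 : 0 < s by lra.
set S := s ^+ 2; have SS : s <= S by rewrite /S expr2 ler_peMl //; lra.
have KS : `|K| <= S * (eps / 2).
  have : 2 * `|K| / eps <= S by lra.
  by rewrite ler_pdivrMr //; lra.
have eLS : e * L * S <= eps / 2 * S by rewrite ler_wpM2r // sqr_ge0.
have S0 : S != 0 by rewrite expf_neq0 // gt_eqF.
set v := S^-1 * u s; have uv : u s = S * v by rewrite /v mulrA mulfV // mul1r.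
have := hK s tt s0; rewrite -/S uv => /andP[low up].
have := ler_norm K; have := ler_norm (- K); rewrite normrN => hk1 hk2.
rewrite ler_norml; apply/andP; split; nra.
Unshelve. all: by end_near.
Qed.

Section ScaledIntegral.
Variables (d : measure_display) (T : measurableType d) (R : realType).
Variable P : probability T R.
Implicit Types (f : T -> R) (a b : R).

Lemma integrable_affine f a b : P.-integrable setT (EFin \o f) ->
  P.-integrable setT (EFin \o (fun w => a * f w + b)).
Proof.
move=> If; have -> : EFin \o (fun w => a * f w + b) =
    (fun w => a%:E * (EFin \o f) w)%E \+ (EFin \o cst b).
  by apply: funext => w /=; rewrite EFinD EFinM.
apply: integrableD => //; [exact: integrableZl | exact: finite_measure_integrable_cst].
Qed.

Lemma Rintegral_affine f a b : P.-integrable setT (EFin \o f) ->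
  \int[P]_w (a * f w + b) = a * \int[P]_w f w + b.
Proof.
move=> If; rewrite RintegralD //; last exact: finite_measure_integrable_cst.
  rewrite RintegralZl // Rintegral_cst // -[in RHS](mulr1 b).
  by congr (_ + b * _); exact: (congr1 fine (probability_setT P)).
by have := integrable_affine a 0 If; under eq_fun do rewrite addr0.
Qed.

Lemma EFin_Rintegral f : P.-integrable setT (EFin \o f) ->
  (\int[P]_w f w)%:E = (\int[P]_w (f w)%:E)%E.
Proof. by move=> If; rewrite fineK // integrable_fin_num. Qed.

Lemma integrable_ge0 f : measurable_fun setT f -> (forall w, 0 <= f w) ->
  (\int[P]_w (f w)%:E < +oo)%E -> P.-integrable setT (EFin \o f).
Proof.
move=> mf f0 If; apply/integrableP; split; first exact/measurable_EFinP.
by under eq_integral do rewrite /= ger0_norm //.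
Qed.

Lemma cvg_scaled_integral (h : R -> T -> R) (g : T -> R) (c : R) :
  (forall s, measurable_fun setT (h s)) ->
  P.-integrable setT (EFin \o g) -> (forall w, 0 <= g w) ->
  quadratic_equiv (fun s w => h s w - c) g ->
  (fun s => (s ^- 2)%:E * (\int[P]_w (h s w)%:E - c%:E))%E @ +oo -->
    (\int[P]_w (g w)%:E)%E.
Proof.
move=> mh Ig g0 hg.
(* integrability of h s is not assumed: it follows from the sandwich at e = 1 *)
have Ih s : 0 < s -> P.-integrable setT (EFin \o h s).
  move=> s0; have [K hK] := hg 1 (andb_true_intro (conj ltr01 (lexx 1))).
  apply: le_integrable (integrable_affine (2 * s ^+ 2) (`|K| + `|c|) Ig) => //.
    exact/measurable_EFinP.
  move=> w _; rewrite /= !lee_fin [leRHS]ger0_norm; last first.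
    by have := g0 w; have := sqr_ge0 s; have := normr_ge0 K; have := normr_ge0 c; nra.
  have := hK s w s0; have := ler_norm K; have := ler_norm c.
  have := ler_norm (- K); have := ler_norm (- c); rewrite !normrN ler_norml.
  have := g0 w; have := sqr_ge0 s; nra.
pose Phi s := s ^- 2 * (\int[P]_w h s w - c).
have PhiE : \forall s \near +oo,
    ((s ^- 2)%:E * (\int[P]_w (h s w)%:E - c%:E))%E = (Phi s)%:E.
  near=> s; have s0 : 0 < s by near: s; apply: nbhs_pinfty_gt; rewrite num_real.
  by rewrite -EFin_Rintegral ?Ih // -EFinB -EFinM.
rewrite -EFin_Rintegral //; apply: cvg_EFin; first by apply: filterS PhiE => s ->.
apply: cvg_trans (near_eq_cvg _) (cvg_quadratic_equiv _ _).
- by apply: filterS PhiE => s /= ->.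
- exact: Rintegral_ge0.
move=> e e01; have [K hK] := hg e e01; exists K => s _ s0.
have -> : \int[P]_w h s w - c = \int[P]_w (1 * h s w + - c).
  by rewrite Rintegral_affine ?Ih // mul1r.
have -> : (1 - e) * (s ^+ 2 * \int[P]_w g w) - K =
    \int[P]_w ((1 - e) * s ^+ 2 * g w + - K) by rewrite Rintegral_affine // mulrA.
have -> : (1 + e) * (s ^+ 2 * \int[P]_w g w) + K =
    \int[P]_w ((1 + e) * s ^+ 2 * g w + K) by rewrite Rintegral_affine // mulrA.
apply/andP; split; apply: le_Rintegral; rewrite ?integrable_affine ?Ih //;
  by move=> w _; have /andP[lo up] := hK s w s0; rewrite mul1r -mulrA.
Unshelve. all: by end_near.
Qed.

End ScaledIntegral.

Lemma integrable_sqnorm_proj_cone (d : measure_display) (T : measurableType d)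
    (R : realType) (n : nat) (P : probability T R) (Z : T -> 'rV[R]_n)
    (K : set 'rV[R]_n) :
  (forall i, measurable_fun setT (fun w => Z w ord0 i)) ->
  (\int[P]_w (sqnorm (Z w))%:E < +oo)%E ->
  closed K -> K 0 -> (forall t v, 0 <= t -> K v -> K (t *: v)) ->
  P.-integrable setT (EFin \o (fun w => sqnorm (eproj K (Z w)))).
Proof.
move=> mZ Zfin cK K0 KZ.
apply: le_integrable (integrable_ge0 (measurable_sqnorm mZ) _ Zfin) => //.
- exact/measurable_EFinP/(measurable_sqnorm_proj_cone mZ cK K0 KZ).
- move=> w _; rewrite /= lee_fin !ger0_norm ?sqnorm_ge0 //.
  exact: sqnorm_proj_cone_le cK K0 KZ _.
- by move=> w; exact: sqnorm_ge0.
Qed.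

Unset Implicit Arguments. Set Strict Implicit.

Theorem proposition3 (R : realType) (n : nat)
  (C : set 'rV[R]_n) (theta : 'rV[R]_n)
  (d : measure_display) (T : measurableType d) (P : probability T R)
  (Z : T -> 'rV[R]_n) :
  C !=set0 -> closed C -> convex_set_rv C ->
  (forall i : 'I_n, measurable_fun setT (fun w => Z w ord0 i)) ->
  (forall i : 'I_n, (\int[P]_w (Z w ord0 i)%:E = 0)%E) ->
  (\int[P]_w (sqnorm (Z w))%:E < +oo)%E ->
  (exists B : R, forall x : 'rV[R]_n,
     sqnorm (eproj (feas_dir C (eproj C theta)) x) - sqnorm (eproj (core_cone C) x) <= B) ->
  ((fun s : R => ((s ^- 2)%:E *
       \int[P]_w (sqnorm (eproj C (theta + s *: Z w) - eproj C theta))%:E)%E)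
     @ +oo --> (\int[P]_w (sqnorm (eproj (core_cone C) (Z w)))%:E)%E)
  /\
  ((fun s : R => ((s ^- 2)%:E *
       (\int[P]_w (sqnorm (eproj C (theta + s *: Z w) - theta))%:E
        - (sqnorm (eproj C theta - theta))%:E))%E)
     @ +oo --> (\int[P]_w (sqnorm (eproj (core_cone C) (Z w)))%:E)%E).
Proof.
move=> C0 cC cvx mZ _ Zfin [B hB].
have Ig := integrable_sqnorm_proj_cone mZ Zfin
  (@core_cone_closed _ _ C) (@core_cone0 _ _ C) (@core_coneZ _ _ C).
have mh c s := measurable_sqnorm_proj mZ theta s c C0 cC cvx.
have g0 w := sqnorm_ge0 (eproj (core_cone C) (Z w)).
split.
- under eq_fun do rewrite -[X in (_ * X)%E]sube0.
  apply: cvg_scaled_integral (mh _) Ig g0 _.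
  move=> e /(quadratic_equiv_proj C0 cC cvx hB)[K hK].
  by exists K => s w s0; rewrite subr0; exact: hK.
- apply: cvg_scaled_integral (mh _) Ig g0 _.
  move=> e /(quadratic_equiv_excess C0 cC cvx hB)[K hK].
  by exists K => s w s0; exact: hK.
Qed.
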